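(* Any GET operation by client $c$ on a key $k$ of partition $p$ in which the client sends $hrv = hrm[:,p]$ (its current row for partition $p$ of the highest-read matrix) satisfies per-key monotonic-read consistency: if the operation is issued at time $t$ and served by server $s$, which reads the value of $k$ at time $t'$, then every $w\in ClientReads(c,k,t)$ is included in $CommittedWrites(s,k,t')$.
   Context: System model. Data is replicated in $D$ datacenters and split into $P$ partitions. In each datacenter $d$, each partition is replicated by a Raft group with a leader $L_d$; Raft guarantees that all members of a group commit the same totally ordered sequence of log entries, each with a log index, in increasing index order. Every version $v$ of a key carries a value, an originating datacenter $v.dc\_id$, the log index $idx(v)$ it received in the Raft log of its originating datacenter, and a hybrid logical clock (HLC) timestamp $v.t=\langle l,c\rangle$; HLC timestamps are compared lexicographically. Writes committed in the group of datacenter $d$ that originated at $d$ are forwarded, in commit order, over FIFO channels to the leaders of the same partition in every other datacenter, which append them (carrying their original index $idx(v)$) to their own Raft logs. Each server $s$ keeps a vector $sv$ of length $D$, initially zero; when $s$ commits a version $v$ it sets $sv[v.dc\_id]:=idx(v)$ and adds $v$ to the version chain of its key. Client protocol. Each client $c$ keeps $D\times P$ matrices $hrm$ (highest read) and $hwm$ (highest write), initially zero, and HLC timestamps $dt_r,dt_w$, initially zero. GET of key $k$ in partition $p$: the client sends vectors $hrv,hwv$ of length $D$ (each either the zero vector or $hrm[:,p]$, resp. $hwm[:,p]$); the server blocks while there is $i$ with $sv[i]<hrv[i]$ or $sv[i]<hwv[i]$; it then returns the version $v$ of $k$ in its version chain with the largest timestamp, together with $v.dc\_id$, $sv[v.dc\_id]$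 and $v.t$; the client sets $hrm[v.dc\_id,p]:=\max(hrm[v.dc\_id,p],sv[v.dc\_id])$ and $dt_r:=\max(dt_r,v.t)$. PUT of key $k$ in partition $p$ at leader $L_d$: the client sends a dependency timestamp $dt$ (one of $0$, $dt_r$, $dt_w$, $\max(dt_r,dt_w)$); the leader updates its HLC $\langle l,c\rangle$ with $dt$ by the rule: $l':=l$; $l:=\max(l',pt,dt.l)$ where $pt$ is its physical clock; then $c:=\max(c,dt.c)+1$ if $l=l'=dt.l$, else $c:=c+1$ if $l=l'$, else $c:=dt.c+1$ if $l=dt.l$, else $c:=0$; it timestamps the new version with the updated HLC value $t$ and $dc\_id=d$, appends it to the Raft log, and after commit replies with $d$, $sv[d]$ and $t$; the client sets $hwm[d,p]:=\max(hwm[d,p],sv[d])$ and $dt_w:=\max(dt_w,t)$. Definitions. $CommittedWrites(s,k,t)$ is the ordered sequence of all writes of key $k$ committed at server $s$ by time $t$; $ClientWrites(c,k,t)$ is the ordered sequence of all writes of $k$ done by client $c$ by time $t$; $ClientReads(c,k,t)$ is the set of writes whose value of $k$ has been read by client $c$ by time $t$. *)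

From mathcomp Require Import all_boot.
Set Implicit Arguments. Unset Strict Implicit. Unset Printing Implicit Defensive.

(* Hybrid logical clock timestamps <l,c>, compared lexicographically. *)
Definition HLC := (nat * nat)%type.
Definition hlc_le (a b : HLC) : bool := (a.1 < b.1) || ((a.1 == b.1) && (a.2 <= b.2)).
Definition hlc_max (a b : HLC) : HLC := if hlc_le a b then b else a.

(* Dependency-timestamp choices a client may send with a PUT. *)
Inductive DtChoice := DtZero | DtR | DtW | DtMax.

Section Model.
(* D datacenters ('I_D), P partitions ('I_P), keys K, values Val, servers S. *)
Variables (D P : nat) (K Val : eqType) (S : Type).

(* A version: (key, value, originating datacenter dc_id, log index idx, HLC t). *)
Definition Version := (K * Val * 'I_D * nat * HLC)%type.
Definition vkey (v : Version) : K := v.1.1.1.1.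
Definition vval (v : Version) : Val := v.1.1.1.2.
Definition vdc (v : Version) : 'I_D := v.1.1.2.
Definition vidx (v : Version) : nat := v.1.2.
Definition vts (v : Version) : HLC := v.2.

(* part k : partition of key k; sdc s / spart s : the Raft group (datacenter,
   partition) server s belongs to; committed s t : the totally ordered sequence
   of log entries (versions) committed at server s by (global) time t. *)
Variables (part : K -> 'I_P) (sdc : S -> 'I_D) (spart : S -> 'I_P)
          (committed : S -> nat -> seq Version).

(* The version vector sv of a server whose committed sequence is l:
   initially 0, and committing v sets sv[v.dc_id] := idx(v). *)
Definition svec (l : seq Version) (i : 'I_D) : nat :=
  foldl (fun n v => if vdc v == i then vidx v else n) 0 l.

Definition from_dc (d : 'I_D) (v : Version) : bool := vdc v == d.

(* CommittedWrites(s,k,t): the ordered sequence of writes of k committed at s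
   by time t (this is also the version chain of k at s at time t). *)
Definition CommittedWrites (s : S) (k : K) (t : nat) : seq Version :=
  [seq v <- committed s t | vkey v == k].

Definition system_model : Prop :=
  [/\
      (forall s t1 t2, t1 <= t2 -> prefix (committed s t1) (committed s t2)),
      (* Raft: all members of a group commit the same totally ordered sequence *)
      (forall s1 s2 t1 t2, sdc s1 = sdc s2 -> spart s1 = spart s2 ->
         prefix (committed s1 t1) (committed s2 t2) \/
         prefix (committed s2 t2) (committed s1 t1)),
      (forall s t v, v \in committed s t -> part (vkey v) = spart s),
      (* writes originating at the group's datacenter carry their (1-based)
         Raft log index in that group's log *)
      (forall s t l1 v l2, committed s t = l1 ++ v :: l2 ->
         vdc v = sdc s -> vidx v = (size l1).+1) &
      (* writes originating at d are forwarded in commit order over FIFO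
         channels (keeping their original index): at a server of datacenter
         <> d, the writes originating at d form a prefix of the writes
         originating at d committed by the group of d of the same partition *)
      (forall s t d, d != sdc s -> exists s' t',
         [/\ sdc s' = d, spart s' = spart s &
             prefix [seq v <- committed s t | from_dc d v]
                    [seq v <- committed s' t' | from_dc d v]])].

Record GetOp := MkGet {
  g_key : K;
  g_hrv : bool;          (* true: hrv = hrm[:,p]; false: hrv = 0 *)
  g_hwv : bool;          (* true: hwv = hwm[:,p]; false: hwv = 0 *)
  g_issue : nat;
  g_srv : S;
  g_read : nat;          (* time the server reads the value of k *)
  g_resp : nat;
  g_ret : option Version;(* returned version (None if no version of k yet) *)
  g_retsv : nat          (* returned sv[v.dc_id] *)
}.

Record PutOp := MkPut {
  p_key : K;
  p_val : Val;
  p_dt : DtChoice;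
  p_issue : nat;
  p_srv : S;             (* the leader L_d of the group serving the PUT *)
  p_resp : nat;
  p_ver : Version;       (* the new version (returned d = dc_id, t = ts) *)
  p_retsv : nat          (* returned sv[d] *)
}.

Inductive Op := OGet of GetOp | OPut of PutOp.

Definition op_issue (o : Op) : nat :=
  match o with OGet g => g_issue g | OPut q => p_issue q end.
Definition op_resp (o : Op) : nat :=
  match o with OGet g => g_resp g | OPut q => p_resp q end.

Record CState := MkCState {
  hrm : 'I_D -> 'I_P -> nat;
  hwm : 'I_D -> 'I_P -> nat;
  dt_r : HLC;
  dt_w : HLC
}.

Definition cstate0 : CState :=
  MkCState (fun _ _ => 0) (fun _ _ => 0) (0, 0) (0, 0).

Definition bump (m : 'I_D -> 'I_P -> nat) (d : 'I_D) (p : 'I_P) (n : nat) :=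
  fun i j => if (i == d) && (j == p) then maxn (m i j) n else m i j.

Definition cstep (st : CState) (o : Op) : CState :=
  match o with
  | OGet g =>
      match g_ret g with
      | Some v => MkCState (bump (hrm st) (vdc v) (part (g_key g)) (g_retsv g))
                           (hwm st) (hlc_max (dt_r st) (vts v)) (dt_w st)
      | None => st
      end
  | OPut q => MkCState (hrm st)
                       (bump (hwm st) (vdc (p_ver q)) (part (p_key q)) (p_retsv q))
                       (dt_r st) (hlc_max (dt_w st) (vts (p_ver q)))
  end.

Definition client_state (h : seq Op) : CState := foldl cstep cstate0 h.

Definition valid_get (st : CState) (g : GetOp) : Prop :=
  let k := g_key g in let p := part k in let s := g_srv g in
  let sv := svec (committed s (g_read g)) in
  let chain := CommittedWrites s k (g_read g) in
  [/\ spart s = p,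
      (g_issue g <= g_read g <= g_resp g) /\ (g_issue g < g_resp g),
      (* the server no longer blocks at read time *)
      (forall i, ((if g_hrv g then hrm st i p else 0) <= sv i) /\
                 ((if g_hwv g then hwm st i p else 0) <= sv i)),
      (if chain is [::] then g_ret g = None else
         exists2 v, g_ret g = Some v &
           v \in chain /\ forall u, u \in chain -> hlc_le (vts u) (vts v)) &
      (forall v, g_ret g = Some v -> g_retsv g = sv (vdc v))].

Definition valid_put (st : CState) (q : PutOp) : Prop :=
  let s := p_srv q in let v := p_ver q in
  [/\ spart s = part (p_key q), p_issue q < p_resp q,
      [/\ vkey v = p_key q, vval v = p_val q & vdc v = sdc s],
      v \in committed s (p_resp q) &
      p_retsv q = svec (committed s (p_resp q)) (sdc s)].

Definition valid_op (st : CState) (o : Op) : Prop :=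
  match o with OGet g => valid_get st g | OPut q => valid_put st q end.

Definition valid_history (h : seq Op) : Prop :=
  (forall pre o post, h = pre ++ o :: post -> valid_op (client_state pre) o) /\
  (forall pre o1 o2 post, h = pre ++ o1 :: o2 :: post -> op_resp o1 <= op_issue o2).

Definition ClientReads (h : seq Op) (k : K) (t : nat) (w : Version) : bool :=
  has (fun o => match o with
                | OGet g => (g_key g == k) && (g_resp g <= t) && (g_ret g == Some w)
                | OPut _ => false
                end) h.

End Model.

From Pilot Require Import Defs.
From mathcomp Require Import all_boot.
From mathcomp Require Import zify.
Set Implicit Arguments. Unset Strict Implicit.

(* A write w read by an earlier GET left hrm[dc w, p] >= sv[dc w] of the
   server s0 that returned it; the new GET only completes once its server s
   satisfies sv[dc w] >= hrm[dc w, p].  At every server the writes originating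
   at a datacenter d are a prefix of the d-writes of d's own Raft log, and
   there their indices are the strictly increasing log positions; the two
   d-write sequences of s0 and s are therefore prefixes of one common
   sequence, ordered by their last index, i.e. by sv[d].  So every d-write
   committed at s0, in particular w, is committed at s. *)

Lemma has_split (T : Type) (a : pred T) (s : seq T) :
  has a s -> exists s1 x s2, s = s1 ++ x :: s2 /\ a x.
Proof.
elim: s => [|y s IH] //= /orP[ay|/IH[s1 [x [s2 [-> ax]]]]]; first by exists [::], y, s.
by exists (y :: s1), x, s2.
Qed.

Lemma prefix_filter (T : eqType) (a : pred T) (s1 s2 : seq T) :
  prefix s1 s2 -> prefix (filter a s1) (filter a s2).
Proof. by case/prefixP => s ->; rewrite filter_cat prefix_prefix. Qed.

Lemma prefix_common_size (T : eqType) (A B G : seq T) :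
  prefix A G -> prefix B G -> size A <= size B -> prefix A B.
Proof.
rewrite !prefixE => /eqP EA /eqP EB leAB.
by rewrite -EB take_takel // EA.
Qed.

Lemma last_take (M : seq nat) n : n <= size M ->
  last 0 (take n M) = nth 0 (0 :: M) n.
Proof.
move=> le_n; rewrite (last_nth 0) size_take.
have -> : (if n < size M then n else size M) = n by case: ltnP; lia.
by case: n le_n => [|n] //= _; rewrite nth_take.
Qed.

Lemma prefix_of_last_le (T : eqType) (f : T -> nat) (G A B : seq T) :
  path ltn 0 (map f G) -> prefix A G -> prefix B G ->
  last 0 (map f A) <= last 0 (map f B) -> prefix A B.
Proof.
move=> sortedG AG BG le_last; apply: (prefix_common_size AG BG).
have sA := size_prefix AG; have sB := size_prefix BG.
rewrite leqNgt; apply/negP => ltBA; move: le_last.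
move: AG BG; rewrite !prefixE => /eqP <- /eqP <-.
rewrite !map_take !last_take ?size_map // leqNgt.
have := @sorted_ltn_nth _ ltn ltn_trans 0 (0 :: map f G) sortedG (size B) (size A).
by rewrite !inE /= size_map !ltnS => ->.
Qed.

Lemma path_ltn_filter_positions (T : Type) (a : pred T) (f : T -> nat) (l : seq T) m :
  (forall l1 x l2, l = l1 ++ x :: l2 -> a x -> f x = m + (size l1).+1) ->
  forall m', m' <= m -> path ltn m' (map f (filter a l)).
Proof.
elim: l m => [|x l IH] m Hpos m' le_m'm //=.
have Hpos' : forall l1 y l2, l = l1 ++ y :: l2 -> a y -> f y = m.+1 + (size l1).+1.
  by move=> l1 y l2 El ay; rewrite (Hpos (x :: l1) y l2) ?El //= addSnnS.
case ax: (a x) => /=; last by apply: (IH m.+1 Hpos'); lia.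
have -> : f x = m.+1 by rewrite (Hpos [::] x l) ?addn1.
by rewrite ltnS le_m'm; apply: (IH m.+1 Hpos').
Qed.

Lemma svecE (D : nat) (K Val : eqType) (l : seq (Version D K Val)) (d : 'I_D) :
  svec l d = last 0 (map (@vidx D K Val) (filter (from_dc d) l)).
Proof.
rewrite /svec; elim: l 0 => [|v l IH] n //=.
by rewrite /from_dc; case: eqP => _ /=; apply: IH.
Qed.

Section SystemModel.
Variables (D P : nat) (K Val : eqType) (S : Type).
Variables (part : K -> 'I_P) (sdc : S -> 'I_D) (spart : S -> 'I_P)
          (committed : S -> nat -> seq (Version D K Val)).
Hypothesis Hsys : system_model part sdc spart committed.

Local Notation dlog d s t := [seq v <- committed s t | from_dc d v].

Lemma dlog_home_sorted s t :
  path ltn 0 (map (@vidx D K Val) (dlog (sdc s) s t)).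
Proof.
case: Hsys => _ _ _ Hidx _.
apply: (path_ltn_filter_positions (m := 0)) => // l1 v l2 El /eqP home.
by rewrite (Hidx s t l1 v l2 El home).
Qed.

Lemma dlog_prefix_home s t d : exists s' t',
  [/\ sdc s' = d, spart s' = spart s & prefix (dlog d s t) (dlog d s' t')].
Proof.
case: (eqVneq d (sdc s)) => [->|ne_d]; first by exists s, t; split=> //; apply: prefix_refl.
by case: Hsys => _ _ _ _ /(_ s t d ne_d).
Qed.

Lemma dlog_common_home s0 t0 s1 t1 d : spart s0 = spart s1 -> exists s t,
  [/\ sdc s = d, prefix (dlog d s0 t0) (dlog d s t) & prefix (dlog d s1 t1) (dlog d s t)].
Proof.
move=> same_part.
have [x0 [u0 [home0 part0 pre0]]] := dlog_prefix_home s0 t0 d.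
have [x1 [u1 [home1 part1 pre1]]] := dlog_prefix_home s1 t1 d.
case: Hsys => _ raft _ _ _.
have [x01|x10] := raft x0 x1 u0 u1 (etrans home0 (esym home1))
                    (etrans part0 (etrans same_part (esym part1))).
- exists x1, u1; split=> //.
  exact: prefix_trans pre0 (prefix_filter _ x01).
- exists x0, u0; split=> //.
  exact: prefix_trans pre1 (prefix_filter _ x10).
Qed.

Lemma dlog_prefix_of_svec_le s0 t0 s1 t1 d : spart s0 = spart s1 ->
  svec (committed s0 t0) d <= svec (committed s1 t1) d ->
  prefix (dlog d s0 t0) (dlog d s1 t1).
Proof.
move=> same_part; rewrite !svecE.
have [s [t [home pre0 pre1]]] := dlog_common_home t0 t1 d same_part.
by apply: prefix_of_last_le pre0 pre1; rewrite -home; apply: dlog_home_sorted.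
Qed.

Lemma mem_committed_of_svec_le s0 t0 s1 t1 v : spart s0 = spart s1 ->
  v \in committed s0 t0 ->
  svec (committed s0 t0) (vdc v) <= svec (committed s1 t1) (vdc v) ->
  v \in committed s1 t1.
Proof.
move=> same_part v0 /(dlog_prefix_of_svec_le same_part)/prefixP[tl Etl].
have v_d0 : v \in dlog (vdc v) s0 t0 by rewrite mem_filter /from_dc eqxx.
have : v \in dlog (vdc v) s1 t1 by rewrite Etl mem_cat v_d0.
by rewrite mem_filter => /andP[].
Qed.

End SystemModel.

Section Client.
Variables (D P : nat) (K Val : eqType) (S : Type).
Variables (part : K -> 'I_P) (sdc : S -> 'I_D) (spart : S -> 'I_P)
          (committed : S -> nat -> seq (Version D K Val)).
Local Notation Op := (Op D K Val S).
Local Notation valid_history := (valid_history part sdc spart committed).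

Lemma valid_op_issue_lt_resp st (o : Op) :
  valid_op part sdc spart committed st o -> op_issue o < op_resp o.
Proof. by case: o => [g [_ [_ ?]]|q [_ ?]]. Qed.

Lemma valid_history_resp_le_issue h l1 (o1 : Op) l2 o2 l3 : valid_history h ->
  h = l1 ++ o1 :: l2 ++ o2 :: l3 -> op_resp o1 <= op_issue o2.
Proof.
case=> Hops Hseq; elim: l2 l1 o1 => [|x l2 IH] l1 o1 Eh; first exact: Hseq Eh.
have Ex : h = (l1 ++ [:: o1]) ++ x :: l2 ++ o2 :: l3 by rewrite Eh -catA.
have x_lt := valid_op_issue_lt_resp (Hops _ _ _ Ex).
have o1_le := Hseq l1 o1 x (l2 ++ o2 :: l3) Eh.
by apply: leq_trans o1_le (leq_trans (ltnW x_lt) (IH _ _ Ex)).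
Qed.

Lemma ClientReads_before_issue h pre (o : Op) post k w : valid_history h ->
  h = pre ++ o :: post -> ClientReads h k (op_issue o) w ->
  ClientReads pre k (op_issue o) w.
Proof.
move=> Hh Eh; rewrite Eh /ClientReads has_cat /= => /orP[//|/orP[read_o|]].
  move: read_o; case: o Eh => // g Eh /andP[/andP[_ resp_le] _].
  by move: (valid_op_issue_lt_resp (proj1 Hh _ _ _ Eh)); rewrite ltnNge resp_le.
case/has_split => l1 [o' [l2 [Epost read_o']]]; rewrite {}Epost in Eh.
case: o' read_o' Eh => // g' /andP[/andP[_ resp_le] _] Eh.
have o_lt := valid_op_issue_lt_resp (proj1 Hh _ _ _ Eh).
have le_g' := valid_history_resp_le_issue Hh (Eh : h = pre ++ o :: l1 ++ OGet g' :: l2).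
have Eg' : h = (pre ++ o :: l1) ++ OGet g' :: l2 by rewrite Eh -catA.
have g'_lt := valid_op_issue_lt_resp (proj1 Hh _ _ _ Eg').
by move: resp_le; rewrite /= leqNgt (ltn_trans (leq_trans o_lt le_g') g'_lt).
Qed.

Lemma ClientReadsP (h : seq Op) k t w : ClientReads h k t w ->
  exists l1 g l2, [/\ h = l1 ++ OGet g :: l2, g_key g = k & g_ret g = Some w].
Proof.
case/has_split => l1 [o [l2 [-> read_o]]].
case: o read_o => // g /andP[/andP[/eqP k_g _] /eqP ret_g].
by exists l1, g, l2.
Qed.

Lemma hrm_client_state_mono (h : seq Op) st i j :
  hrm st i j <= hrm (foldl (cstep part) st h) i j.
Proof.
elim: h st => [|o h IH] st //=; apply: leq_trans (IH _).
case: o => [g|q] //=; case: (g_ret g) => [v|] //=.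
by rewrite /Defs.bump; case: ifP => _ //; apply: leq_maxl.
Qed.

Lemma hrm_ge_read_retsv l1 (g : GetOp D K Val S) l2 w : g_ret g = Some w ->
  g_retsv g <= hrm (client_state part (l1 ++ OGet g :: l2)) (vdc w) (part (g_key g)).
Proof.
move=> ret_g; rewrite /client_state foldl_cat /=.
apply: leq_trans (hrm_client_state_mono _ _ _ _).
by rewrite /= ret_g /Defs.bump /= !eqxx leq_maxr.
Qed.

Lemma valid_get_ret st (g : GetOp D K Val S) w :
  valid_get part spart committed st g -> g_ret g = Some w ->
  w \in CommittedWrites committed (g_srv g) (g_key g) (g_read g) /\
  g_retsv g = svec (committed (g_srv g) (g_read g)) (vdc w).
Proof.
case=> _ _ _ chain retsv ret_g; split; last exact: retsv.
by case: (CommittedWrites _ _ _ _) chain => [|x l]; rewrite ret_g // => -[v [<-] []].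
Qed.

End Client.

Theorem mainTheorem2 (D P : nat) (K Val : eqType) (S C : Type)
  (part : K -> 'I_P) (sdc : S -> 'I_D) (spart : S -> 'I_P)
  (committed : S -> nat -> seq (Version D K Val))
  (hist : C -> seq (Op D K Val S))
  (Hsys : system_model part sdc spart committed)
  (Hcl : forall c', valid_history part sdc spart committed (hist c'))
  (c : C) (pre post : seq (Op D K Val S)) (g : GetOp D K Val S)
  (Hg : hist c = pre ++ OGet g :: post)
  (Hhrv : g_hrv g = true) :
  forall w, ClientReads (hist c) (g_key g) (g_issue g) w ->
    w \in CommittedWrites committed (g_srv g) (g_key g) (g_read g).
Proof.
move=> w /(ClientReads_before_issue (Hcl c) Hg)/ClientReadsP[l1 [g0 [l2 [Epre k_g0 ret_g0]]]].
have [Hops _] := Hcl c.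
have [part_s _ unblocked _ _] := Hops _ _ _ Hg.
have valid_g0 : valid_get part spart committed (client_state part l1) g0.
  by apply: (Hops l1 (OGet g0) (l2 ++ OGet g :: post)); rewrite Hg Epre -catA.
have [part_s0 _ _ _ _] := valid_g0.
have [] := valid_get_ret valid_g0 ret_g0.
rewrite !mem_filter -k_g0 => /andP[-> w_s0] retsv_g0 /=.
apply: (mem_committed_of_svec_le Hsys _ w_s0); first by rewrite part_s part_s0 k_g0.
rewrite -retsv_g0; apply: leq_trans (proj1 (unblocked (vdc w))).
by rewrite Hhrv Epre -k_g0; apply: hrm_ge_read_retsv.
Qed.
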